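(* Let $n\ge 1$ and $1\le c\le n$. The minimum algorithm size (MAS) of the $c$-scattering problem ($c$SCT) for a swarm of $n$ robots under the SSYNC scheduler is exactly $c$: there is an algorithm of size $c$ that solves $c$SCT, and no algorithm of size smaller than $c$ solves it.
   Context: Model. A swarm consists of $n\ge1$ robots $r_1,\dots,r_n$, modeled as points in $\mathbb R^2$. Each robot $r_i$ has a local right-handed $x$-$y$ coordinate system $Z_i$ whose origin is always the robot's current position, with arbitrary (adversarially chosen, fixed) unit length and axis orientation; robots do not share coordinate systems. The configuration at time $t$ is the multiset $P_t$ of the $n$ robot positions (robots can detect multiplicities). A target function $\phi$ maps each finite multiset $P$ of points of $\mathbb R^2$ with $(0,0)\in P$ to a point $\phi(P)\in\mathbb R^2$. Time is discrete, $t=0,1,2,\dots$. Under the semi-synchronous (SSYNC) scheduler, at each time $t$ an adversary chooses a set of robots to activate; each activated robot $r_i$ observes $P_t$ expressed in $Z_i$, evaluates its target function on this multiset, and moves to the resulting point (interpreted in $Z_i$), arriving before time $t+1$; non-activated robots do not move. Schedules are fair: every robot is activated infinitely often. An algorithm of size $m$ is a set $\Phi$ of $m$ distinct target functions ($m\le n$); an assignment is a surjection $\mathcal A$ from the robots onto $\Phi$, robot $r_i$ using $\mathcal A(r_i)$. $\Phi$ solves a problem if for every assignment, every choice of local coordinate systems, every initial configuration and every fair SSYNC schedule, the resulting execution solves the problem. The MAS of a problem is the least $m$ such that some algorithm of size $m$ solves it, and $\infty$ if no algorithm of any size $m\le n$ solves it. For a multiset $P$, $\overline P$ denotes its set of distinct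 points. Problem. The $c$-scattering problem ($c$SCT): starting from any initial configuration, the execution must reach a configuration $P$ with $|\overline P|\ge c$. *)

From Stdlib Require Import Reals List Permutation Arith.
From Coquelicot Require Import Coquelicot.
Import ListNotations.
Open Scope R_scope.

(** An orientation-preserving
    similarity frame of a robot (right-handed, arbitrary unit length and
    axis orientation) is a nonzero complex number [f]: local coordinates [q]
    correspond to the global point [pos + f * q]. *)
Definition point := C.
Definition origin : point := RtoC 0.

(** Multisets are represented by lists; a target function must be
    invariant under permutation of its input list. *)
Definition target := list point -> point.

Definition multiset_fun (phi : target) : Prop :=
  forall s s', Permutation s s' -> phi s = phi s'.

(** Two target functions are distinct iff they differ on some multiset
    containing the origin (their domain). *)
Definition distinct_targets (phi psi : target) : Prop :=
  exists s, In origin s /\ phi s <> psi s.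

Definition dflt_target : target := fun _ => origin.

Definition is_algorithm (n m : nat) (Phi : list target) : Prop :=
  length Phi = m /\ (m <= n)%nat /\
  (forall k, (k < m)%nat -> multiset_fun (nth k Phi dflt_target)) /\
  (forall k l, (k < m)%nat -> (l < m)%nat -> k <> l ->
     distinct_targets (nth k Phi dflt_target) (nth l Phi dflt_target)).

Definition is_assignment (n m : nat) (A : nat -> nat) : Prop :=
  (forall i, (i < n)%nat -> (A i < m)%nat) /\
  (forall k, (k < m)%nat -> exists i, (i < n)%nat /\ A i = k).

Definition config_ms (n : nat) (pos : nat -> point) : list point :=
  map pos (seq 0 n).

Definition local_view (n : nat) (f : point) (pos : nat -> point) (i : nat) : list point :=
  map (fun j => Cdiv (Cminus (pos j) (pos i)) f) (seq 0 n).

Fixpoint exec (n : nat) (Phi : list target) (A : nat -> nat) (F : nat -> point)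
    (P0 : nat -> point) (act : nat -> nat -> bool) (t : nat) : nat -> point :=
  match t with
  | O => P0
  | S t' =>
      let pos := exec n Phi A F P0 act t' in
      fun i => if act t' i
               then Cplus (pos i) (Cmult (F i) (nth (A i) Phi dflt_target (local_view n (F i) pos i)))
               else pos i
  end.

Definition fair (n : nat) (act : nat -> nat -> bool) : Prop :=
  forall i, (i < n)%nat -> forall t, exists t', (t <= t')%nat /\ act t' i = true.

Definition at_least_distinct (n c : nat) (pos : nat -> point) : Prop :=
  exists l : list point, length l = c /\ NoDup l /\
    forall p, In p l -> In p (config_ms n pos).

Definition solves_cSCT (n c : nat) (Phi : list target) : Prop :=
  forall (A : nat -> nat) (F : nat -> point) (P0 : nat -> point) (act : nat -> nat -> bool),
    is_assignment n (length Phi) A ->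
    (forall i, F i <> origin) ->
    fair n act ->
    exists t, at_least_distinct n c (exec n Phi A F P0 act t).

(** Give every robot the same frame, start all of them at the
    origin and activate everybody at every round.  Two robots running the
    same target function then see the same view forever, hence stay
    co-located; with only [m < c] target functions at most [m] distinct
    points ever occur.

    Robots of class [k < c] move along their local x-axis by
    [step_ratio k / g], where [g] is the sum of the inverse distances to the
    other robots and [step_ratio k = k / (4 (k + 1))]; if all robots are
    co-located they move by [k].  Since [g] scales like the inverse of the
    frame's unit length, the global move has length [step_ratio k / G] (with
    [G] the global inverse-distance sum), at most a quarter of the distance
    to any other occupied point.  Hence (1) separated robots never merge,
    (2) co-located robots of different classes split as soon as one of class
    [>= 1] is activated while another point is occupied, as [step_ratio] is
    injective, and (3) if all robots are co-located, an activated robot of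
    class [>= 1] leaves any robot of class 0.  By fairness, eventually any two
    robots of different classes are apart, and one robot per class gives [c]
    distinct points. *)

From Stdlib Require Import Reals List Lra Lia Permutation Classical.
From Coquelicot Require Import Coquelicot.
Import ListNotations.
Open Scope R_scope.

Lemma few_representatives_few_points (n m : nat) (R : nat -> nat) (pos : nat -> point)
    (l : list point) :
  (forall i, (i < n)%nat -> (R i < m)%nat /\ pos i = pos (R i)) ->
  NoDup l -> (forall p, In p l -> In p (config_ms n pos)) ->
  (length l <= m)%nat.
Proof.
  intros Hrep Hnodup Hin.
  assert (Hincl : incl l (map pos (seq 0 m))).
  { intros p Hp. apply Hin in Hp. unfold config_ms in Hp.
    apply in_map_iff in Hp as [i [<- Hi]]. apply in_seq in Hi.
    destruct (Hrep i ltac:(lia)) as [HR ->].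
    apply in_map. apply in_seq. lia. }
  pose proof (NoDup_incl_length Hnodup Hincl) as Hlen.
  now rewrite length_map, length_seq in Hlen.
Qed.

Definition sync_exec (n : nat) (Phi : list target) (A : nat -> nat) : nat -> nat -> point :=
  exec n Phi A (fun _ => RtoC 1) (fun _ => origin) (fun _ _ => true).

(** In that execution, robots with the same target function always see the
    same view, so they stay co-located. *)
Lemma sync_exec_same_class (n : nat) (Phi : list target) (A : nat -> nat) (t i j : nat) :
  A i = A j -> sync_exec n Phi A t i = sync_exec n Phi A t j.
Proof.
  revert i j; induction t as [|t IH]; intros i j Hij; [reflexivity|].
  unfold sync_exec in *; simpl. rewrite (IH i j Hij), Hij.
  unfold local_view. erewrite map_ext; [reflexivity|].
  intro k. now rewrite (IH i j Hij).
Qed.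

(** Robot [i] uses function [min i (m - 1)]: a surjective assignment when
    [1 <= m <= n], under which robot [i] has
    the same class as the robot numbered by its class. *)
Definition clamp_assignment (m : nat) (i : nat) : nat := Nat.min i (m - 1).

Lemma clamp_assignment_surjective (n m : nat) :
  (1 <= m <= n)%nat -> is_assignment n m (clamp_assignment m).
Proof.
  intros Hm; unfold clamp_assignment; split.
  - intros i _. lia.
  - intros k Hk. exists k. split; lia.
Qed.

Lemma too_few_functions_fail (n c m : nat) (Phi : list target) :
  (1 <= m < c)%nat -> is_algorithm n m Phi -> ~ solves_cSCT n c Phi.
Proof.
  intros Hm [Hlen [Hmn _]] Hsolves.
  set (A := clamp_assignment m).
  assert (HA : is_assignment n (length Phi) A)
    by (rewrite Hlen; apply clamp_assignment_surjective; lia).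
  destruct (Hsolves A (fun _ => RtoC 1) (fun _ => origin) (fun _ _ => true) HA)
    as [t [l [Hl [Hnodup Hin]]]].
  - intros _ E. injection E. lra.
  - intros i _ t. exists t. split; auto.
  - enough (length l <= m)%nat by lia.
    apply (few_representatives_few_points n m A (sync_exec n Phi A t)); auto.
    intros i _. split; [unfold A, clamp_assignment; lia|].
    apply sync_exec_same_class. unfold A, clamp_assignment. lia.
Qed.

(** Sum of the inverse norms of a list of vectors; a zero vector contributes
    nothing since [/ 0 = 0]. Applied to a view, it measures how crowded the
    neighbourhood of the observer is. *)
Definition inv_norm_sum (s : list C) : R := fold_right (fun x acc => / Cmod x + acc) 0 s.

Lemma inv_nonneg (x : R) : 0 <= x -> 0 <= / x.
Proof.
  intros Hx. destruct (Req_dec x 0) as [->|Hx0]; [rewrite Rinv_0; lra|].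
  apply Rlt_le, Rinv_0_lt_compat. lra.
Qed.

Lemma inv_norm_sum_nonneg (s : list C) : 0 <= inv_norm_sum s.
Proof.
  induction s as [|x s IH]; simpl; [lra|].
  pose proof (inv_nonneg _ (Cmod_ge_0 x)). lra.
Qed.

Lemma inv_norm_sum_ge (s : list C) (x : C) : In x s -> / Cmod x <= inv_norm_sum s.
Proof.
  induction s as [|y s IH]; simpl; [tauto|].
  intros [<-|Hx].
  - pose proof (inv_norm_sum_nonneg s). lra.
  - pose proof (inv_nonneg _ (Cmod_ge_0 y)). specialize (IH Hx). lra.
Qed.

Lemma inv_norm_sum_perm (s s' : list C) : Permutation s s' -> inv_norm_sum s = inv_norm_sum s'.
Proof. induction 1; simpl; lra. Qed.

Lemma inv_norm_sum_scale (v : nat -> C) (f : C) (L : list nat) : f <> 0 ->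
  inv_norm_sum (map (fun j => (v j / f)%C) L) = Cmod f * inv_norm_sum (map v L).
Proof.
  intros Hf. induction L as [|j L IH]; simpl; [ring|].
  rewrite IH, Cmod_div, Rinv_div by exact Hf. unfold Rdiv. ring.
Qed.

Lemma inv_norm_sum_origin : inv_norm_sum [origin] = 0.
Proof. simpl. unfold origin. rewrite Cmod_0, Rinv_0. ring. Qed.

Definition step_ratio (k : nat) : R := INR k / (4 * (INR k + 1)).

Lemma step_ratio_bounds (k : nat) : 0 <= step_ratio k <= / 4.
Proof.
  unfold step_ratio. pose proof (pos_INR k). split.
  - apply Rmult_le_pos; [lra|]. apply inv_nonneg. lra.
  - apply (Rmult_le_reg_r (4 * (INR k + 1))); [lra|]. field_simplify; lra.
Qed.

Lemma step_ratio_pos (k : nat) : (1 <= k)%nat -> 0 < step_ratio k.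
Proof.
  intros Hk. unfold step_ratio. pose proof (lt_0_INR k ltac:(lia)).
  apply Rmult_lt_0_compat; [lra|]. apply Rinv_0_lt_compat. lra.
Qed.

Lemma step_ratio_inj (a b : nat) : step_ratio a = step_ratio b -> a = b.
Proof.
  unfold step_ratio. intros H. pose proof (pos_INR a). pose proof (pos_INR b).
  apply INR_eq. field_simplify in H; try lra.
  apply (f_equal (fun z => z * (4 * INR b + 4) * (4 * INR a + 4))) in H.
  field_simplify in H; lra.
Qed.

Definition scatter_target (k : nat) : target := fun s =>
  RtoC (if Req_EM_T (inv_norm_sum s) 0 then INR k else step_ratio k / inv_norm_sum s).

Definition scatter_algorithm (c : nat) : list target := map scatter_target (seq 0 c).

Lemma nth_scatter_algorithm (c k : nat) : (k < c)%nat ->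
  nth k (scatter_algorithm c) dflt_target = scatter_target k.
Proof.
  intros Hk. unfold scatter_algorithm.
  rewrite (nth_indep _ dflt_target (scatter_target 0)) by (rewrite length_map, length_seq; lia).
  now rewrite map_nth, seq_nth.
Qed.

Lemma scatter_is_algorithm (n c : nat) : (c <= n)%nat -> is_algorithm n c (scatter_algorithm c).
Proof.
  intros Hcn. unfold is_algorithm, scatter_algorithm at 1.
  rewrite length_map, length_seq. repeat split; [exact Hcn| |].
  - intros k Hk s s' Hperm. rewrite nth_scatter_algorithm by exact Hk.
    unfold scatter_target. now rewrite (inv_norm_sum_perm s s' Hperm).
  - (* on the view [origin] of a lone robot, class [k] outputs the point [k] *)
    intros k l Hk Hl Hkl. rewrite !nth_scatter_algorithm by assumption.
    exists [origin]. split; [now left|].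
    unfold scatter_target. rewrite inv_norm_sum_origin.
    destruct Req_EM_T as [_|]; [|lra].
    intro E. apply Hkl, INR_eq. exact (f_equal fst E).
Qed.

Lemma Cminus_neq_0 (p q : C) : p <> q -> (p - q)%C <> 0.
Proof.
  intros Hpq E. apply Hpq.
  replace p with ((p - q) + q)%C by ring. rewrite E. ring.
Qed.

Lemma Cplus_reg_l (p d e : C) : (p + d)%C = (p + e)%C -> d = e.
Proof.
  intros E. replace d with (p + d - p)%C by ring. rewrite E. ring.
Qed.

Lemma Cmod_minus_sym (p q : C) : Cmod (p - q) = Cmod (q - p).
Proof. rewrite <- Cmod_opp. f_equal. ring. Qed.

Lemma short_moves_no_merge (p q dp dq : C) :
  p <> q -> Cmod dp <= / 4 * Cmod (q - p) -> Cmod dq <= / 4 * Cmod (p - q) ->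
  (p + dp)%C <> (q + dq)%C.
Proof.
  intros Hpq Hdp Hdq E.
  assert (Hdiff : (q - p)%C = (dp + - dq)%C).
  { replace q with ((q + dq) + - dq)%C by ring. rewrite <- E. ring. }
  pose proof (Cmod_triangle dp (- dq)) as Htri.
  rewrite Cmod_opp, <- Hdiff in Htri.
  rewrite Cmod_minus_sym in Hdq.
  pose proof (proj1 (Cmod_gt_0 _) (Cminus_neq_0 q p (not_eq_sym Hpq))).
  lra.
Qed.

Section OneRound.
Variables (n : nat) (A : nat -> nat) (F : nat -> point) (act : nat -> bool)
  (pos : nat -> point).

Definition crowding (i : nat) : R :=
  inv_norm_sum (map (fun j => (pos j - pos i)%C) (seq 0 n)).

Definition move (i : nat) : C :=
  (F i * scatter_target (A i) (local_view n (F i) pos i))%C.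

Definition displacement (i : nat) : C := if act i then move i else RtoC 0.

Lemma crowding_ge (i j : nat) : (j < n)%nat ->
  / Cmod (pos j - pos i) <= crowding i.
Proof.
  intros Hj. apply inv_norm_sum_ge, in_map_iff.
  exists j. split; [reflexivity|]. apply in_seq. lia.
Qed.

Lemma crowding_pos (i j : nat) : (j < n)%nat -> pos j <> pos i -> 0 < crowding i.
Proof.
  intros Hj Hji. pose proof (crowding_ge i j Hj).
  pose proof (Rinv_0_lt_compat _ (proj1 (Cmod_gt_0 _) (Cminus_neq_0 _ _ Hji))).
  lra.
Qed.

Lemma view_inv_norm_sum (i : nat) : F i <> origin ->
  inv_norm_sum (local_view n (F i) pos i) = Cmod (F i) * crowding i.
Proof. intros HF. exact (inv_norm_sum_scale (fun j => (pos j - pos i)%C) (F i) _ HF). Qed.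

Lemma move_norm (i : nat) : F i <> origin -> 0 < crowding i ->
  Cmod (move i) = step_ratio (A i) / crowding i.
Proof.
  intros HF Hcr. pose proof (proj1 (Cmod_gt_0 _) HF).
  unfold move, scatter_target. rewrite view_inv_norm_sum by exact HF.
  destruct Req_EM_T as [E|_]; [nra|].
  rewrite Cmod_mult, Cmod_R, Rabs_pos_eq.
  - field. lra.
  - apply Rmult_le_pos; [apply step_ratio_bounds|]. apply inv_nonneg. nra.
Qed.

Lemma move_nonzero (i : nat) : F i <> origin -> (1 <= A i)%nat -> move i <> 0.
Proof.
  intros HF Hk E. apply (f_equal Cmod) in E.
  unfold move, scatter_target in E. rewrite Cmod_0, Cmod_mult, Cmod_R in E.
  pose proof (proj1 (Cmod_gt_0 _) HF).
  apply Rmult_integral in E as [E|E]; [lra|]. apply Rabs_eq_0 in E.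
  pose proof (inv_norm_sum_nonneg (local_view n (F i) pos i)).
  destruct Req_EM_T as [_|Hne].
  - pose proof (lt_0_INR (A i) ltac:(lia)). lra.
  - pose proof (step_ratio_pos _ Hk).
    assert (0 < step_ratio (A i) / inv_norm_sum (local_view n (F i) pos i))
      by (apply Rdiv_lt_0_compat; lra).
    lra.
Qed.

Lemma move_class0 (i : nat) : A i = 0%nat -> move i = 0.
Proof.
  intros H0. unfold move, scatter_target, step_ratio. rewrite H0. simpl INR.
  destruct Req_EM_T; unfold Rdiv; rewrite ?Rmult_0_l; apply Cmult_0_r.
Qed.

Lemma displacement_short (i j : nat) : (j < n)%nat -> pos j <> pos i -> F i <> origin ->
  Cmod (displacement i) <= / 4 * Cmod (pos j - pos i).
Proof.
  intros Hj Hji HF. pose proof (Cmod_ge_0 (pos j - pos i)).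
  unfold displacement. destruct (act i); [|rewrite Cmod_0; lra].
  pose proof (crowding_pos i j Hj Hji) as Hcr.
  rewrite move_norm by assumption.
  set (D := Cmod (pos j - pos i)).
  assert (HD : 0 < D) by exact (proj1 (Cmod_gt_0 _) (Cminus_neq_0 _ _ Hji)).
  assert (Hinv : / crowding i <= D).
  { rewrite <- (Rinv_inv D). apply Rinv_le_contravar; [now apply Rinv_0_lt_compat|].
    apply crowding_ge, Hj. }
  pose proof (step_ratio_bounds (A i)). pose proof (inv_nonneg _ (Rlt_le _ _ Hcr)).
  unfold Rdiv. nra.
Qed.

Definition next_pos (i : nat) : C := (pos i + displacement i)%C.

Lemma next_pos_no_merge (a b : nat) : (a < n)%nat -> (b < n)%nat ->
  pos a <> pos b -> F a <> origin -> F b <> origin -> next_pos a <> next_pos b.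
Proof.
  intros Ha Hb Hab HFa HFb. apply short_moves_no_merge; [exact Hab| |].
  - apply displacement_short; auto.
  - apply displacement_short; auto.
Qed.

(** Co-located robots of different classes split when one of class [>= 1]
    is activated while some point is occupied elsewhere: their moves have
    different lengths. *)
Lemma next_pos_splits (i j w : nat) : (w < n)%nat ->
  pos i = pos j -> pos w <> pos i -> act i = true -> (1 <= A i)%nat -> A i <> A j ->
  F i <> origin -> F j <> origin -> next_pos i <> next_pos j.
Proof.
  intros Hw Hij Hwi Hact Hk Hne HFi HFj E.
  unfold next_pos in E. rewrite Hij in E. apply Cplus_reg_l in E.
  assert (Hcr : 0 < crowding i) by exact (crowding_pos i w Hw Hwi).
  assert (Hcrj : crowding j = crowding i) by (unfold crowding; now rewrite Hij).
  pose proof (move_norm i HFi Hcr) as Hmi.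
  pose proof (step_ratio_pos _ Hk).
  unfold displacement in E. rewrite Hact in E.
  destruct (act j).
  - rewrite E, move_norm, Hcrj in Hmi by (rewrite ?Hcrj; assumption).
    apply Hne, step_ratio_inj.
    apply (f_equal (fun z => z * crowding i)) in Hmi. field_simplify in Hmi; lra.
  - rewrite E, Cmod_0 in Hmi.
    assert (0 < step_ratio (A i) / crowding i) by (apply Rdiv_lt_0_compat; lra).
    lra.
Qed.

Lemma next_pos_escapes (i z : nat) :
  pos i = pos z -> act i = true -> (1 <= A i)%nat -> A z = 0%nat -> F i <> origin ->
  next_pos i <> next_pos z.
Proof.
  intros Hiz Hact Hk Hz HF E.
  unfold next_pos in E. rewrite Hiz in E. apply Cplus_reg_l in E.
  unfold displacement in E. rewrite Hact in E.
  rewrite (move_class0 z Hz) in E.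
  destruct (act z); exact (move_nonzero i HF Hk E).
Qed.

End OneRound.

Definition eventually (P : nat -> Prop) : Prop := exists T, forall t, (T <= t)%nat -> P t.

Lemma eventually_forall_lt (N : nat) (Q : nat -> nat -> Prop) :
  (forall x, (x < N)%nat -> eventually (Q x)) ->
  eventually (fun t => forall x, (x < N)%nat -> Q x t).
Proof.
  induction N as [|N IH]; intros HQ.
  - exists 0%nat. intros t _ x Hx. lia.
  - destruct IH as [T1 H1]; [intros x Hx; apply HQ; lia|].
    destruct (HQ N ltac:(lia)) as [T2 H2].
    exists (Nat.max T1 T2). intros t Ht x Hx.
    destruct (Nat.eq_dec x N) as [->|Hne]; [apply H2; lia|apply H1; lia].
Qed.

Lemma separated_classes_scatter (n c : nat) (A : nat -> nat) (pos : nat -> point) :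
  is_assignment n c A ->
  (forall i j, (i < n)%nat -> (j < n)%nat -> A i <> A j -> pos i <> pos j) ->
  at_least_distinct n c pos.
Proof.
  intros [_ Hsurj] Hsep.
  assert (Hrep : forall m, (m <= c)%nat -> exists l : list point, length l = m /\ NoDup l /\
            forall p, In p l -> exists i, (i < n)%nat /\ (A i < m)%nat /\ p = pos i).
  { induction m as [|m IH]; intros Hm.
    - exists []. repeat split; [constructor|]. intros p [].
    - destruct (IH ltac:(lia)) as [l [Hl [Hnodup Hin]]].
      destruct (Hsurj m ltac:(lia)) as [r [Hr Hrm]].
      exists (pos r :: l). repeat split; [simpl; lia| |].
      + constructor; [|exact Hnodup]. intros Hp.
        destruct (Hin _ Hp) as [i [Hi [Him Ep]]].
        apply (Hsep i r Hi Hr); [lia|easy].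
      + intros p [<-|Hp]; [exists r; repeat split; auto; lia|].
        destruct (Hin p Hp) as [i [Hi [Him Ep]]]. exists i. repeat split; auto. }
  destruct (Hrep c (le_n c)) as [l [Hl [Hnodup Hin]]].
  exists l. repeat split; auto.
  intros p Hp. destruct (Hin p Hp) as [i [Hi [_ ->]]].
  apply in_map, in_seq. lia.
Qed.

Section ScatterExecution.
Variables (n c : nat) (A : nat -> nat) (F : nat -> point) (P0 : nat -> point)
  (act : nat -> nat -> bool) (z : nat).
Hypothesis A_range : forall i, (i < n)%nat -> (A i < c)%nat.
Hypothesis z_range : (z < n)%nat.
Hypothesis z_class0 : A z = 0%nat.
Hypothesis frames_nondegenerate : forall i, F i <> origin.
Hypothesis schedule_fair : fair n act.

Local Notation pos := (exec n (scatter_algorithm c) A F P0 act).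

Lemma exec_scatter_step (t i : nat) : (i < n)%nat ->
  pos (S t) i = next_pos n A F (act t) (pos t) i.
Proof.
  intros Hi. simpl. unfold next_pos, displacement, move.
  destruct (act t i).
  - now rewrite nth_scatter_algorithm by (apply A_range, Hi).
  - apply injective_projections; simpl; ring.
Qed.

Lemma separation_persists (a b t t' : nat) : (a < n)%nat -> (b < n)%nat ->
  pos t a <> pos t b -> (t <= t')%nat -> pos t' a <> pos t' b.
Proof.
  intros Ha Hb Hab Ht. induction Ht as [|t' _ IH]; [exact Hab|].
  rewrite !exec_scatter_step by assumption.
  apply next_pos_no_merge; auto.
Qed.

Lemma separated_after_activation (i j w t : nat) :
  (i < n)%nat -> (j < n)%nat -> (w < n)%nat -> (1 <= A i)%nat -> A i <> A j ->
  act t i = true -> pos t w <> pos t i -> eventually (fun t' => pos t' i <> pos t' j).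
Proof.
  intros Hi Hj Hw Hk Hne Hact Hwi.
  destruct (classic (pos t i = pos t j)) as [Hij|Hij].
  - exists (S t). intros t' Ht'. apply (separation_persists i j (S t)); auto.
    rewrite !exec_scatter_step by assumption.
    apply (next_pos_splits n A F (act t) (pos t) i j w); auto.
  - exists t. intros t' Ht'. now apply (separation_persists i j t).
Qed.

(** Every robot of class [>= 1] eventually separates from each robot of
    another class: if at its next activation all robots are co-located, it
    first leaves robot [z], and its following activation separates it. *)
Lemma eventually_separated (i j : nat) : (i < n)%nat -> (j < n)%nat ->
  (1 <= A i)%nat -> A i <> A j -> eventually (fun t => pos t i <> pos t j).
Proof.
  intros Hi Hj Hk Hne.
  destruct (schedule_fair i Hi 0%nat) as [t1 [_ Hact1]].
  destruct (classic (exists w, (w < n)%nat /\ pos t1 w <> pos t1 i)) as [[w [Hw Hwi]]|Hgathered].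
  - exact (separated_after_activation i j w t1 Hi Hj Hw Hk Hne Hact1 Hwi).
  - assert (Hzi : pos t1 i = pos t1 z).
    { apply NNPP. intros Hzi. apply Hgathered. exists z. auto. }
    assert (Hescape : pos (S t1) i <> pos (S t1) z).
    { rewrite !exec_scatter_step by assumption.
      apply next_pos_escapes; auto. }
    destruct (schedule_fair i Hi (S t1)) as [t2 [Ht2 Hact2]].
    apply (separated_after_activation i j z t2); auto.
    intros E. apply (separation_persists i z (S t1) t2); auto.
Qed.

Lemma eventually_classes_separated :
  eventually (fun t => forall i j, (i < n)%nat -> (j < n)%nat -> A i <> A j ->
                                   pos t i <> pos t j).
Proof.
  assert (H : eventually (fun t => forall i, (i < n)%nat -> forall j, (j < n)%nat ->
                                   A i <> A j -> pos t i <> pos t j)).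
  { apply eventually_forall_lt. intros i Hi.
    apply (eventually_forall_lt n (fun j t => A i <> A j -> pos t i <> pos t j)).
    intros j Hj.
    destruct (Nat.eq_dec (A i) (A j)) as [Heq|Hne];
      [exists 0%nat; intros t _ Hne; contradiction|].
    (* at least one of the two robots has class [>= 1] *)
    destruct (Nat.eq_dec (A i) 0) as [Hi0|Hi0].
    - destruct (eventually_separated j i Hj Hi ltac:(lia) (not_eq_sym Hne)) as [T HT].
      exists T. intros t Ht _. apply not_eq_sym, HT, Ht.
    - destruct (eventually_separated i j Hi Hj ltac:(lia) Hne) as [T HT].
      exists T. intros t Ht _. apply HT, Ht. }
  destruct H as [T HT]. exists T. intros t Ht i j Hi Hj. now apply HT.
Qed.

End ScatterExecution.

Lemma scatter_solves (n c : nat) : (1 <= c)%nat -> solves_cSCT n c (scatter_algorithm c).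
Proof.
  intros Hc A F P0 act HA HF Hfair.
  unfold scatter_algorithm in HA at 1. rewrite length_map, length_seq in HA.
  pose proof HA as [Hrange Hsurj].
  destruct (Hsurj 0%nat Hc) as [z [Hz Hz0]].
  destruct (eventually_classes_separated n c A F P0 act z Hrange Hz Hz0 HF Hfair) as [T HT].
  exists T. apply (separated_classes_scatter n c A); [exact HA|]. apply HT, le_n.
Qed.

Theorem theorem1 (n c : nat) :
  (1 <= n)%nat -> (1 <= c <= n)%nat ->
  (exists Phi : list target, is_algorithm n c Phi /\ solves_cSCT n c Phi) /\
  (forall (m : nat) (Phi : list target),
     (1 <= m < c)%nat -> is_algorithm n m Phi -> ~ solves_cSCT n c Phi).
Proof.
  intros _ Hc. split.
  - exists (scatter_algorithm c). split.
    + apply scatter_is_algorithm. lia.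
    + apply scatter_solves. lia.
  - exact (too_few_functions_fail n c).
Qed.
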